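(* Let $G$ be a scheduling game on two related machines $M_1,M_2$ with speeds $s_1=1$ and $s_2=s\le 1$ and arbitrary priority lists $\pi_1,\pi_2$, in which either all jobs have positive deterioration, or all jobs have negative deterioration and are delay-averse (i.e. $a_i\le 1$ for all $i$). Run the following algorithm: first assign all jobs to $M_1$; then for $k=1,\dots,n$, the job $i$ with $\pi_2(i)=k$ performs a best-response move with respect to the current profile, i.e. it moves to $M_2$ if and only if this strictly decreases its completion time. Then the resulting profile is a pure Nash equilibrium of $G$.
   Context: Scheduling game: a finite set $N$ of $n\ge1$ jobs (players) and a set $M$ of machines. Machine $j$ has speed $s_j>0$ and a priority list $\pi_j$, a bijection $N\to\{1,\dots,n\}$; job $u$ has higher priority than $v$ on $j$ iff $\pi_j(u)<\pi_j(v)$. Each job $i$ has a processing-time function $p_i$: with positive deterioration $p_i(t)=b_i+a_it$ ($b_i,a_i\ge0$), with negative deterioration $p_i(t)=\max\{\tau_i,b_i-a_it\}$ ($b_i,a_i\ge0$, $\tau_i>0$). A profile $\sigma\in M^N$ assigns each job to a machine. On machine $j$, the jobs assigned to it, listed in increasing $\pi_j$-order as $i_1,i_2,\dots$, are processed without idle time: $S_{i_1}(\sigma)=0$, $C_{i_k}(\sigma)=S_{i_k}(\sigma)+p_{i_k}(S_{i_k}(\sigma))/s_j$, $S_{i_{k+1}}(\sigma)=C_{i_k}(\sigma)$. The cost of job $i$ is $C_i(\sigma)$. A pure Nash equilibrium (NE) is a profile in which no job can strictly decrease its completion time by unilaterally changing its machine. A job is delay-averse if it has positive deterioration, or negative deterioration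 with $a_i\le \max_j s_j$. *)

From mathcomp Require Import all_boot all_order all_algebra all_fingroup.
Set Implicit Arguments. Unset Strict Implicit. Unset Printing Implicit Defensive.
Import Order.TTheory GRing.Theory Num.Theory.
Local Open Scope ring_scope.

Section Sched.
Variable R : realFieldType.
Variable n : nat.
Variable M : finType.

(* Processing time of job i started at time t.
   pos = true  : positive deterioration  p_i(t) = b_i + a_i t
   pos = false : negative deterioration  p_i(t) = max(tau_i, b_i - a_i t) *)
Definition proc (pos : bool) (a b tau : 'I_n -> R) (i : 'I_n) (t : R) : R :=
  if pos then b i + a i * t else Num.max (tau i) (b i - a i * t).

(* Jobs of machine j under profile sigma, listed in increasing pi_j order
   (prio j maps a job to its 0-based position on the priority list). *)
Definition jobs_on (prio : M -> {perm 'I_n}) (sigma : 'I_n -> M) (j : M)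
  : seq 'I_n :=
  [seq i <- [seq ((prio j)^-1)%g k | k <- enum 'I_n] | sigma i == j].

Fixpoint compl (f : 'I_n -> R -> R) (t : R) (l : seq 'I_n) (i : 'I_n) : R :=
  match l with
  | [::] => t
  | u :: l' => let c := t + f u t in if u == i then c else compl f c l' i
  end.

Definition cost (speed : M -> R) (prio : M -> {perm 'I_n}) (p : 'I_n -> R -> R)
  (sigma : 'I_n -> M) (i : 'I_n) : R :=
  compl (fun u t => p u t / speed (sigma i)) 0 (jobs_on prio sigma (sigma i)) i.

Definition upd (sigma : 'I_n -> M) (i : 'I_n) (m : M) : 'I_n -> M :=
  fun k => if k == i then m else sigma k.

Definition is_NE (speed : M -> R) (prio : M -> {perm 'I_n}) (p : 'I_n -> R -> R)
  (sigma : 'I_n -> M) : Prop :=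
  forall (i : 'I_n) (m : M),
    cost speed prio p sigma i <= cost speed prio p (upd sigma i m) i.
End Sched.

(* Two machines: false = M_1 (speed 1), true = M_2 (speed s). *)
Definition speed2 {R : realFieldType} (s : R) (m : bool) : R := if m then s else 1.
Definition prio2 {n} (pi1 pi2 : {perm 'I_n}) (m : bool) : {perm 'I_n} :=
  if m then pi2 else pi1.

Definition alg_step {R : realFieldType} {n} (s : R) (pi1 pi2 : {perm 'I_n})
  (p : 'I_n -> R -> R) (sigma : 'I_n -> bool) (k : 'I_n) : 'I_n -> bool :=
  let i := (pi2^-1)%g k in
  if cost (speed2 s) (prio2 pi1 pi2) p (upd sigma i true) i
       < cost (speed2 s) (prio2 pi1 pi2) p sigma i
  then upd sigma i true else sigma.

Definition alg_result {R : realFieldType} {n} (s : R) (pi1 pi2 : {perm 'I_n})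
  (p : 'I_n -> R -> R) : 'I_n -> bool :=
  foldl (alg_step s pi1 pi2 p) (fun _ => false) (enum 'I_n).

From mathcomp Require Import all_boot all_order all_algebra all_fingroup.
From mathcomp Require Import lra.
Import Order.TTheory GRing.Theory Num.Theory.
Local Open Scope ring_scope.

(* The algorithm keeps the invariant that after k steps the jobs of pi_2-rank
   at least k are still on M_1 and none of the first k jobs gains by switching
   machine.  When the job x of rank k moves to M_2 it becomes the last job
   there, so no job on M_2 is delayed, and jobs on M_1 only lose a predecessor.
   The delicate case is a job u on M_2 that follows x on pi_1: u finishes on
   M_2 before x starts there, and since the move strictly improved the
   completion time of x at speed s <= 1 while t + p(t) is nondecreasing
   (delay aversion), x starts on M_2 no later than it started on M_1, which in
   turn is before u could start on M_1. *)

Section ListSchedule.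
Variables (R : realFieldType) (n : nat) (f : 'I_n -> R -> R).

Fixpoint start (t : R) (l : seq 'I_n) (i : 'I_n) : R :=
  match l with
  | [::] => t
  | u :: l' => if u == i then t else start (t + f u t) l' i
  end.

Lemma compl_start l i t :
  i \in l -> compl f t l i = start t l i + f i (start t l i).
Proof.
elim: l t => [|u l IH] t //=; rewrite in_cons.
by case: (eqVneq u i) => [->|_] //= /IH.
Qed.

Lemma compl_filter_eq (P Q : pred 'I_n) L i t : P i ->
  (forall u, (index u L <= index i L)%N -> P u = Q u) ->
  compl f t (filter P L) i = compl f t (filter Q L) i.
Proof.
move=> Pi; elim: L t => [|u L IH] t //= PQ.
have <- : P u = Q u by apply: PQ; rewrite /= eqxx.
case: (eqVneq u i) => [->|ui]; first by rewrite Pi /= eqxx.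
have {}PQ v : (index v L <= index i L)%N -> P v = Q v.
  by move=> vi; apply: PQ => /=; rewrite (negbTE ui); case: (u == v).
by case: (P u) => /=; rewrite ?(negbTE ui); apply: IH.
Qed.

Hypothesis f_ge0 : forall u t, 0 <= t -> 0 <= f u t.

Lemma start_ge l i t : 0 <= t -> t <= start t l i.
Proof.
elim: l t => [|u l IH] t t0 //=; case: ifP => _ //.
by apply: le_trans (IH _ _); rewrite ?lerDl ?addr_ge0 ?f_ge0.
Qed.

Lemma start_le_compl l i t : 0 <= t -> start t l i <= compl f t l i.
Proof.
elim: l t => [|u l IH] t t0 //=; case: ifP => _; first by rewrite lerDl f_ge0.
by apply: IH; rewrite addr_ge0 ?f_ge0.
Qed.

Lemma compl_le_start (P : pred 'I_n) L i x t :
  0 <= t -> P i -> (index i L < index x L)%N ->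
  compl f t (filter P L) i <= start t (filter P L) x.
Proof.
move=> + Pi; elim: L t => [|u L IH] t t0 //=.
case: (eqVneq u i) => [->|ui].
  case: (eqVneq i x) => [->|ix]; first by rewrite ltnn.
  by rewrite Pi /= eqxx (negbTE ix) => _; rewrite start_ge ?addr_ge0 ?f_ge0.
case: (eqVneq u x) => [->|ux] // ix.
by case: (P u) => /=; rewrite ?(negbTE ui) ?(negbTE ux); apply: IH;
  rewrite ?addr_ge0 ?f_ge0.
Qed.

Hypothesis completion_mono :
  forall u t1 t2, 0 <= t1 -> t1 <= t2 -> t1 + f u t1 <= t2 + f u t2.

Lemma compl_filter_mono (P Q : pred 'I_n) L i t1 t2 :
  0 <= t1 -> t1 <= t2 -> P i -> (forall u, P u -> Q u) ->
  compl f t1 (filter P L) i <= compl f t2 (filter Q L) i.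
Proof.
move=> + + Pi PQ; elim: L t1 t2 => [|u L IH] t1 t2 t10 t12 //=.
case: (boolP (P u)) => Pu.
  rewrite (PQ _ Pu) /=; case: eqP => _; first exact: completion_mono.
  by apply: IH; rewrite ?addr_ge0 ?f_ge0 ?completion_mono.
case: (boolP (Q u)) => Qu /=; last exact: IH.
case: eqP => [ui|_]; first by move: Pu; rewrite ui Pi.
by apply: IH; rewrite // (le_trans t12) // lerDl f_ge0 // (le_trans t10).
Qed.

Lemma start_filter_mono (P Q : pred 'I_n) L x i t1 t2 :
  0 <= t1 -> t1 <= t2 -> P x -> Q i -> (index x L < index i L)%N ->
  (forall u, u != x -> P u -> Q u) ->
  start t1 (filter P L) x <= start t2 (filter Q L) i.
Proof.
move=> + + Px Qi + PQ; elim: L t1 t2 => [|u L IH] t1 t2 t10 t12 //=.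
case: (eqVneq u x) => [->|ux].
  by rewrite Px /= eqxx => _; rewrite (le_trans t12) ?start_ge ?(le_trans t10).
case: (eqVneq u i) => [->|ui] // xi.
case: (boolP (P u)) => Pu.
  rewrite (PQ _ ux Pu) /= (negbTE ux) (negbTE ui).
  by apply: IH; rewrite ?addr_ge0 ?f_ge0 ?completion_mono.
case: (boolP (Q u)) => Qu /=; last exact: IH.
by rewrite (negbTE ui); apply: IH; rewrite // (le_trans t12) // lerDl f_ge0 //
  (le_trans t10).
Qed.

End ListSchedule.

Arguments start {R n}.

Section TwoMachineGame.
Variables (R : realFieldType) (n : nat) (s : R) (pi1 pi2 : {perm 'I_n}).
Variable p : 'I_n -> R -> R.
Hypotheses (s_gt0 : 0 < s) (s_le1 : s <= 1).
Hypothesis p_ge0 : forall u t, 0 <= t -> 0 <= p u t.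
Hypothesis completion_mono :
  forall u t1 t2, 0 <= t1 -> t1 <= t2 -> t1 + p u t1 <= t2 + p u t2.

Local Notation prio := (prio2 pi1 pi2).
Local Notation C := (cost (speed2 s) prio p).
Local Notation ptime m := (fun u t => p u t / speed2 s m).

Definition prio_list (m : bool) : seq 'I_n :=
  [seq ((prio m)^-1)%g k | k <- enum 'I_n].

Local Notation queue sigma m := [seq v <- prio_list m | sigma v == m].

Lemma index_prio_list m u : index u (prio_list m) = prio m u.
Proof.
rewrite /prio_list -{1}(permK (prio m) u) index_map ?index_enum_ord //.
exact: perm_inj.
Qed.

Lemma mem_prio_list m u : u \in prio_list m.
Proof. by rewrite /prio_list -(permK (prio m) u) mem_map ?mem_enum //; exact: perm_inj. Qed.

Lemma costE sigma i : C sigma i = compl (ptime (sigma i)) 0 (queue sigma (sigma i)) i.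
Proof. by []. Qed.

Lemma ptime_ge0 m u t : 0 <= t -> 0 <= p u t / speed2 s m.
Proof. by move=> t0; rewrite divr_ge0 ?p_ge0 //; case: m; rewrite /= ?ltW. Qed.

Lemma cost_prefix_eq sigma sigma' u : sigma u = sigma' u ->
  (forall v, (prio (sigma u) v <= prio (sigma u) u)%N -> sigma v = sigma' v) ->
  C sigma u = C sigma' u.
Proof.
move=> su eq_before; rewrite !costE -su; apply: compl_filter_eq; first by rewrite eqxx.
by move=> v; rewrite !index_prio_list => /eq_before ->.
Qed.

Lemma eq_cost sigma sigma' u : sigma =1 sigma' -> C sigma u = C sigma' u.
Proof. by move=> eq_s; apply: cost_prefix_eq. Qed.

Lemma cost_upd_later sigma x b u : u != x ->
  (prio (sigma u) u < prio (sigma u) x)%N -> C (upd sigma x b) u = C sigma u.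
Proof.
move=> ux ux_prio; have su : upd sigma x b u = sigma u by rewrite /upd (negbTE ux).
apply: cost_prefix_eq => // v; rewrite su /upd.
by case: eqP => // ->; rewrite leqNgt ux_prio.
Qed.

Lemma updC (sigma : 'I_n -> bool) x y b c : x != y ->
  upd (upd sigma x b) y c =1 upd (upd sigma y c) x b.
Proof.
by move=> xy v; rewrite /upd; case: (eqVneq v y) => [->|//]; rewrite eq_sym (negbTE xy).
Qed.

Lemma cost_M1_shrink sigma sigma' u : sigma' u = false ->
  (forall v, sigma' v = false -> sigma v = false) -> C sigma' u <= C sigma u.
Proof.
move=> su M1_sub; rewrite !costE su (M1_sub _ su) /=.
apply: compl_filter_mono => //.
- by move=> v t t0; rewrite divr1 p_ge0.
- by move=> v t1 t2 t10 t12; rewrite !divr1 completion_mono.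
- by rewrite su.
- by move=> v /eqP /M1_sub ->.
Qed.

Lemma faster_completion_le_start x T S : 0 <= T -> 0 <= S ->
  T + p x T / s < S + p x S -> T <= S.
Proof.
move=> T0 S0 faster; rewrite leNgt; apply/negP => ST; move: faster; apply/negP.
rewrite -leNgt (le_trans (completion_mono x _ _ S0 (ltW ST))) // lerD2l.
by rewrite ler_pdivlMr // ler_piMr ?p_ge0.
Qed.

Definition no_gain sigma u : bool := C sigma u <= C (upd sigma u (~~ sigma u)) u.

Lemma upd_id (sigma : 'I_n -> bool) u : upd sigma u (sigma u) =1 sigma.
Proof. by move=> v; rewrite /upd; case: eqP => [->|]. Qed.

Lemma no_gain_NE sigma : (forall u, no_gain sigma u) -> is_NE (speed2 s) prio p sigma.
Proof.
move=> ng i m; case: (eqVneq m (sigma i)) => [->|ne].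
  by rewrite (eq_cost _ _ _ (upd_id sigma i)).
have -> : m = ~~ sigma i by move: ne; case: m; case: (sigma i).
exact: ng.
Qed.

Definition alg_invariant (k : nat) (sigma : 'I_n -> bool) : Prop :=
  (forall u, (k <= pi2 u)%N -> sigma u = false) /\
  (forall u, (pi2 u < k)%N -> no_gain sigma u).

Section AlgStep.
Variables (k : 'I_n) (sigma : 'I_n -> bool).
Hypothesis sigma_inv : alg_invariant k sigma.

Local Notation x := ((pi2^-1)%g k).
Local Notation sigma1 := (upd sigma x true).

Lemma pi2_x : pi2 x = k.
Proof. by rewrite permKV. Qed.

Lemma sigma_x : sigma x = false.
Proof. by apply: (proj1 sigma_inv); rewrite pi2_x. Qed.

Lemma M2_before_x u : sigma u = true -> (pi2 u < pi2 x)%N.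
Proof. by move=> su; rewrite pi2_x ltnNge; apply/negP => /(proj1 sigma_inv); rewrite su. Qed.

Lemma pi2_ltS u : (pi2 u < k.+1)%N -> u = x \/ (pi2 u < k)%N.
Proof.
rewrite ltnS leq_eqVlt => /orP [/eqP uk|]; [left|by right].
by apply: (@perm_inj _ pi2); rewrite pi2_x; apply: val_inj.
Qed.

Lemma alg_invariant_stay : ~~ (C sigma1 x < C sigma x) -> alg_invariant k.+1 sigma.
Proof.
move=> stay; split=> u; first by move=> ku; apply: (proj1 sigma_inv); exact: ltnW.
case/pi2_ltS => [->|uk]; last exact: (proj2 sigma_inv).
by rewrite /no_gain sigma_x leNgt.
Qed.

Section Move.
Hypothesis improving : C sigma1 x < C sigma x.

Lemma no_gain_moved : no_gain sigma1 x.
Proof.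
have back : upd sigma1 x (~~ sigma1 x) =1 sigma.
  by move=> v; rewrite /upd; case: eqP => [->|//]; rewrite eqxx sigma_x.
by rewrite /no_gain (eq_cost _ _ _ back) ltW.
Qed.

Lemma no_gain_M1 u : u != x -> (pi2 u < k)%N -> sigma u = false -> no_gain sigma1 u.
Proof.
move=> ux uk su; have s1u : sigma1 u = false by rewrite /upd (negbTE ux).
have later : C (upd (upd sigma u true) x true) u = C (upd sigma u true) u.
  by apply: cost_upd_later; rewrite // /upd eqxx /= pi2_x.
rewrite /no_gain s1u /=; apply: le_trans (cost_M1_shrink sigma _ _ s1u _) _.
  by move=> v; rewrite /upd; case: ifP.
rewrite -(eq_cost _ _ _ (updC _ _ _ _ _ ux)) later.
by have := proj2 sigma_inv u uk; rewrite /no_gain su.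
Qed.

Lemma start_M2_le_start_M1 :
  start (ptime true) 0 (queue sigma1 true) x <= start (ptime false) 0 (queue sigma false) x.
Proof.
apply: (faster_completion_le_start x); rewrite ?start_ge //; try exact: ptime_ge0.
move: improving; rewrite !costE {1 2}/upd eqxx sigma_x.
by rewrite !compl_start ?mem_filter ?mem_prio_list ?sigma_x /upd ?eqxx //= divr1.
Qed.

Lemma no_gain_M2_late u : u != x -> sigma u = true -> (pi1 x < pi1 u)%N ->
  C sigma1 u <= C (upd sigma1 u false) u.
Proof.
move=> ux su xu; have s1u : sigma1 u = true by rewrite /upd (negbTE ux).
set sigma2 := upd sigma1 u false.
have s2u : sigma2 u = false by rewrite /sigma2 /upd eqxx.
apply: (@le_trans _ _ (start (ptime true) 0 (queue sigma1 true) x)).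
  rewrite costE s1u; apply: compl_le_start; rewrite ?s1u //; first exact: ptime_ge0.
  by rewrite !index_prio_list M2_before_x.
apply: (le_trans start_M2_le_start_M1).
rewrite costE s2u.
apply: le_trans (start_le_compl _ _ _ (ptime_ge0 false) _ _ _ (lexx 0)).
apply: start_filter_mono; rewrite ?sigma_x ?s2u ?index_prio_list //.
- exact: ptime_ge0.
- by move=> v t1 t2 t10 t12; rewrite !divr1 completion_mono.
- by move=> v vx; rewrite /sigma2 /upd (negbTE vx); case: ifP.
Qed.

Lemma no_gain_M2 u : u != x -> (pi2 u < k)%N -> sigma u = true -> no_gain sigma1 u.
Proof.
move=> ux uk su; have s1u : sigma1 u = true by rewrite /upd (negbTE ux).
rewrite /no_gain s1u /=.
case: (ltngtP (pi1 u) (pi1 x)) => [ux1|xu1|/val_inj/perm_inj eq_ux]; last first.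
- by rewrite eq_ux eqxx in ux.
- exact: no_gain_M2_late.
rewrite cost_upd_later ?su ?M2_before_x // -(eq_cost _ _ _ (updC _ _ _ _ _ ux)).
rewrite cost_upd_later //; last by rewrite /upd eqxx.
by have := proj2 sigma_inv u uk; rewrite /no_gain su.
Qed.

Lemma alg_invariant_move : alg_invariant k.+1 sigma1.
Proof.
split=> u.
  move=> ku; have ux : u != x by apply: contraTneq ku => ->; rewrite pi2_x ltnn.
  by rewrite /upd (negbTE ux); apply: (proj1 sigma_inv); exact: ltnW.
case/pi2_ltS => [->|uk]; first exact: no_gain_moved.
have ux : u != x by apply: contraTneq uk => ->; rewrite pi2_x ltnn.
by case su: (sigma u); [exact: no_gain_M2 | exact: no_gain_M1].
Qed.

End Move.

Lemma alg_step_invariant : alg_invariant k.+1 (alg_step s pi1 pi2 p sigma k).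
Proof.
rewrite /alg_step /=; case: ifP => [improving|stay]; first exact: alg_invariant_move.
by apply: alg_invariant_stay; rewrite stay.
Qed.

End AlgStep.

Lemma alg_prefix_invariant m : (m <= n)%N ->
  alg_invariant m (foldl (alg_step s pi1 pi2 p) (fun _ => false) (take m (enum 'I_n))).
Proof.
elim: m => [|m IH] mn; first by rewrite take0; split=> // u; rewrite ltn0.
rewrite (take_nth (Ordinal mn)) ?size_enum_ord // foldl_rcons.
have -> : nth (Ordinal mn) (enum 'I_n) m = Ordinal mn.
  by apply: val_inj; rewrite /= nth_enum_ord.
exact: (alg_step_invariant (Ordinal mn) _ (IH (ltnW mn))).
Qed.

Lemma alg_result_NE : is_NE (speed2 s) prio p (alg_result s pi1 pi2 p).
Proof.
apply: no_gain_NE => u; have [_] := alg_prefix_invariant _ (leqnn n).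
by rewrite take_oversize ?size_enum_ord //; apply; exact: ltn_ord.
Qed.

End TwoMachineGame.

Lemma proc_ge0 (R : realFieldType) n pos (a b tau : 'I_n -> R) u t :
  (forall i, 0 <= a i) -> (forall i, 0 <= b i) -> (forall i, 0 < tau i) ->
  0 <= t -> 0 <= proc pos a b tau u t.
Proof.
move=> a0 b0 tau0 t0; rewrite /proc; case: pos; first by rewrite addr_ge0 ?mulr_ge0.
by rewrite le_max ltW.
Qed.

Lemma proc_completion_mono (R : realFieldType) n pos (a b tau : 'I_n -> R) u t1 t2 :
  (forall i, 0 <= a i) -> (~~ pos -> forall i, a i <= 1) -> t1 <= t2 ->
  t1 + proc pos a b tau u t1 <= t2 + proc pos a b tau u t2.
Proof.
move=> a0 delay_averse t12; rewrite /proc.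
have at12 := ler_wpM2l (a0 u) t12.
case: pos delay_averse => [_|/(_ isT u) a1]; first lra.
have slow : a u * t2 - a u * t1 <= t2 - t1 by rewrite -mulrBr ler_piMl ?subr_ge0.
rewrite !maxEle; case: (leP (tau u) (b u - a u * t1)) => ?;
  by case: (leP (tau u) (b u - a u * t2)) => ?; lra.
Qed.

Theorem theorem2 (R : realFieldType) (n : nat) (s : R)
  (pi1 pi2 : {perm 'I_n}) (pos : bool) (a b tau : 'I_n -> R) :
  (0 < n)%N ->
  0 < s -> s <= 1 ->
  (forall i, 0 <= a i) -> (forall i, 0 <= b i) -> (forall i, 0 < tau i) ->
  (~~ pos -> forall i, a i <= 1) ->
  is_NE (speed2 s) (prio2 pi1 pi2) (proc pos a b tau)
    (alg_result s pi1 pi2 (proc pos a b tau)).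
Proof.
move=> _ s0 s1 a0 b0 tau0 delay_averse.
apply: alg_result_NE => // [u t t0|u t1 t2 _ t12].
  exact: proc_ge0.
exact: proc_completion_mono.
Qed.
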